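(* Let $L=\{0,1,\dots,m\}^n$ ordered componentwise, with bottom $\bot=(0,\dots,0)$. For each $i\in\{1,\dots,n\}$ let $f_i:L\to L$ be monotone and inflationary. Consider a non-interleaving execution with update-only-on-change starting from $G_0=\bot$, in which at each round $t$ a scheduler selects $S_t\subseteq\{1,\dots,n\}$ and $G_{t+1}$ is any committed state reachable by the concurrent execution of $\{f_i: i\in S_t\}$ from $G_t$. Assume the scheduler is fair: each index $i$ belongs to $S_t$ for infinitely many $t$. Then there exists $T$ with $G_t=G^*$ for all $t\ge T$, and $G^*$ is the least common fixed point of $\{f_1,\dots,f_n\}$.
   Context: Non-interleaving execution with update-only-on-change: execution proceeds in rounds $t=0,1,2,\dots$ with committed states $G_t\in L$. In round $t$ each $f_i$, $i\in S_t$, is executed concurrently on shared memory: process $i$ reads a vector $X\in L$, where each coordinate $X[k]$ is read at some time during the round and returns either $G_t[k]$ or the value of some write to coordinate $k$ performed during the round (reads and writes overlapping arbitrarily; no memory consistency guarantee). Process $i$ computes $H=f_i(X)$ and, for each coordinate $k$, issues a write of $H[k]$ to coordinate $k$ if and only if $H[k]\neq X[k]$. When several writes to the same coordinate occur, the final value is the value of one of them (last writer wins in an arbitrary order). At the end of the round, $G_{t+1}[k]=G_t[k]$ if no write to coordinate $k$ occurred, and otherwise $G_{t+1}[k]$ equals the value of one of the writes to coordinate $k$ during the round. A function $f$ is inflationary if $f(G)\ge G$ for all $G$, monotone if $G\le H\Rightarrow f(G)\le f(H)$. The least common fixed point is the least $G\in L$ with $f_i(G)=G$ for all $i$. *)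

From mathcomp Require Import all_boot.
Set Implicit Arguments. Unset Strict Implicit. Unset Printing Implicit Defensive.

Definition L (m n : nat) := {ffun 'I_n -> 'I_m.+1}.

Definition leL (m n : nat) (G H : L m n) : Prop := forall k : 'I_n, G k <= H k.

Definition botL (m n : nat) : L m n := [ffun => ord0].

Definition monotone (m n : nat) (f : L m n -> L m n) : Prop :=
  forall G H, leL G H -> leL (f G) (f H).

Definition inflationary (m n : nat) (f : L m n -> L m n) : Prop :=
  forall G, leL G (f G).

Definition least_common_fixed_point (m n : nat) (f : 'I_n -> L m n -> L m n)
  (Gs : L m n) : Prop :=
  (forall i, f i Gs = Gs) /\
  (forall H, (forall i, f i H = H) -> leL Gs H).

(* One round of non-interleaving execution with update-only-on-change:
   G' is a committed state reachable from G by concurrently executing the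
   f_i, i \in S.
   - X i is the vector read by process i; rt i k is the time at which its
     read of coordinate k completes; wt i k is the time at which its write to
     coordinate k (if issued) starts.  A process issues its writes only after
     it has read X and computed H = f i (X i) (rt i k' < wt i k).
   - Each read X i k returns either the committed value G k or the value of
     some write to coordinate k performed during the round by a process
     j \in S (i.e. f j (X j) k != X j k), which started before the read
     completed (wt j k < rt i k).
   - The committed value of coordinate k is G k if no write to k occurred,
     and otherwise the value of one of the writes to k. *)
Definition round (m n : nat) (f : 'I_n -> L m n -> L m n) (S : {set 'I_n})
  (G G' : L m n) : Prop :=
  exists (X : 'I_n -> L m n) (rt wt : 'I_n -> 'I_n -> nat),
    (forall i k k', rt i k' < wt i k) /\
    (forall i, i \in S -> forall k,
        X i k = G k \/
        exists2 j, j \in S &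
          [/\ f j (X j) k != X j k, X i k = f j (X j) k & wt j k < rt i k]) /\
    (forall k,
        ((forall j, j \in S -> f j (X j) k = X j k) /\ G' k = G k) \/
        exists2 j, j \in S & (f j (X j) k != X j k /\ G' k = f j (X j) k)).

(* Every value read during a round lies between the committed state and any
   common fixed point above it: a read returns either the committed value or
   the output of a process that read strictly earlier, so induction on read
   times applies, using inflationarity for the lower bound and monotonicity
   for the upper one.  Hence rounds are nondecreasing and never overshoot the
   least common fixed point; and a write strictly increases its coordinate, so
   a round that leaves the state unchanged issued no write at all, i.e. every
   scheduled f_i fixes the state.  Since L is finite, the execution stabilises,
   and by fairness the limit is fixed by every f_i. *)

From Stdlib Require Import Classical.
From mathcomp Require Import all_boot.
From mathcomp Require Import zify.

Set Implicit Arguments.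
Unset Strict Implicit.
Unset Printing Implicit Defensive.

Section Round.

Variables (m n : nat) (f : 'I_n -> L m n -> L m n).
Hypothesis f_mono : forall i, monotone (f i).
Hypothesis f_infl : forall i, inflationary (f i).

Section Reads.

Variables (S : {set 'I_n}) (G : L m n) (X : 'I_n -> L m n).
Variables (rt wt : 'I_n -> 'I_n -> nat).
Hypothesis read_before_write : forall i k k', rt i k' < wt i k.
Hypothesis read_source : forall i, i \in S -> forall k,
  X i k = G k \/
  exists2 j, j \in S &
    [/\ f j (X j) k != X j k, X i k = f j (X j) k & wt j k < rt i k].

Lemma read_ge {i k} : i \in S -> G k <= X i k.
Proof.
suff: forall N i k, i \in S -> rt i k < N -> G k <= X i k.
  by move=> reads iS; apply: (reads (rt i k).+1).
elim=> [//|N IH] {}i {}k iS ltN.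
case: (@read_source i iS k) => [-> //|[j jS [_ -> lt_wr]]].
apply: leq_trans (f_infl j (X j) k).
apply: IH jS _; have := read_before_write j k k; lia.
Qed.

Lemma read_le_fixpoint (H : L m n) :
  (forall i, f i H = H) -> leL G H -> forall i k, i \in S -> X i k <= H k.
Proof.
move=> fixH GH.
suff: forall N i k, i \in S -> rt i k < N -> X i k <= H k.
  by move=> reads i k iS; apply: (reads (rt i k).+1).
elim=> [//|N IH] i k iS ltN.
case: (@read_source i iS k) => [-> //|[j jS [_ -> lt_wr]]].
rewrite -(fixH j); apply: f_mono => k'.
apply: IH jS _; have := read_before_write j k k'; lia.
Qed.

Lemma write_gt {j k} : j \in S -> f j (X j) k != X j k -> G k < f j (X j) k.
Proof.
move=> jS ne; apply: leq_ltn_trans (read_ge jS) _.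
by rewrite ltn_neqAle eq_sym ne f_infl.
Qed.

End Reads.

Lemma round_nondecreasing S G G' : round f S G G' -> leL G G'.
Proof.
case=> X [rt [wt [rw [src commit]]]] k.
case: (commit k) => [[_ ->] //|[j jS [ne ->]]].
exact: ltnW (write_gt rw src jS ne).
Qed.

Lemma round_below_fixpoint S G G' H :
  round f S G G' -> (forall i, f i H = H) -> leL G H -> leL G' H.
Proof.
case=> X [rt [wt [rw [src commit]]]] fixH GH k.
case: (commit k) => [[_ ->] //|[j jS [_ ->]]].
rewrite -(fixH j); apply: f_mono => k'.
exact: (read_le_fixpoint rw src fixH GH k' jS).
Qed.

Lemma round_stationary S G : round f S G G -> forall i, i \in S -> f i G = G.
Proof.
case=> X [rt [wt [rw [src commit]]]].
have no_write j k : j \in S -> f j (X j) k = X j k.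
  move=> jS; apply/eqP/negPn/negP => ne.
  case: (commit k) => [[all_silent _]|[j' jS' [ne' eqG]]].
    by rewrite all_silent ?eqxx in ne.
  by have := write_gt rw src jS' ne'; rewrite -eqG ltnn.
have reads_G i : i \in S -> X i = G.
  move=> iS; apply/ffunP => k.
  case: (src i iS k) => [//|[j jS [ne _ _]]].
  by rewrite no_write ?eqxx in ne.
move=> i iS; rewrite -(reads_G i iS); apply/ffunP => k; exact: no_write.
Qed.

End Round.

Lemma nondecreasing_bounded_eventually_constant (p : nat -> nat) (B : nat) :
  {homo p : s t / s <= t} -> (forall t, p t <= B) ->
  exists T, forall t, T <= t -> p t = p T.
Proof.
move=> p_mono p_bnd.
suff: forall d s, B - p s <= d -> exists T, forall t, T <= t -> p t = p T.
  by move=> stabilises; apply: (stabilises _ 0).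
elim=> [|d IH] s gap.
  exists s => t st; have := p_mono s t st; have := p_bnd t; lia.
have [[t st ne]|const] := classic (exists2 t, s <= t & p t != p s).
  apply: (IH t); have := p_mono s t st; have := p_bnd t; lia.
exists s => t st; apply/eqP/negPn/negP => ne; apply: const; by exists t.
Qed.

Definition height (m n : nat) (G : L m n) : nat := \sum_(k < n) (G k : nat).

Lemma height_leL (m n : nat) (G H : L m n) : leL G H -> height G <= height H.
Proof. by move=> GH; apply: leq_sum => k _; apply: GH. Qed.

Lemma height_le (m n : nat) (G : L m n) : height G <= n * m.
Proof.
rewrite -[n in n * _]card_ord -sum_nat_const.
by apply: leq_sum => k _; rewrite -ltnS.
Qed.

Lemma leL_height_eq (m n : nat) (G H : L m n) :
  leL G H -> height G = height H -> G = H.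
Proof.
move=> GH eq_height.
have /leqif_sum eq_iff : forall k, predT k -> G k <= H k ?= iff (G k == H k :> nat).
  by move=> k _; apply/leqif_eq/GH.
move/eqP: eq_height; rewrite eq_iff => /forallP eqGH.
by apply/ffunP => k; apply/val_inj/eqP/eqGH.
Qed.

Section Execution.

Variables (m n : nat) (f : 'I_n -> L m n -> L m n).
Hypothesis f_mono : forall i, monotone (f i).
Hypothesis f_infl : forall i, inflationary (f i).
Variables (S : nat -> {set 'I_n}) (G : nat -> L m n).
Hypothesis G0 : G 0 = botL m n.
Hypothesis Gstep : forall t, round f (S t) (G t) (G t.+1).

Lemma execution_nondecreasing s t : s <= t -> leL (G s) (G t).
Proof.
apply: (@homo_leq _ G (@leL m n)) => [H k | H1 H2 H3 le12 le23 k | t'].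
- exact: leqnn.
- exact: leq_trans (le12 k) (le23 k).
- exact: (round_nondecreasing f_infl (Gstep t')).
Qed.

Lemma execution_below_fixpoint H :
  (forall i, f i H = H) -> forall t, leL (G t) H.
Proof.
move=> fixH; elim=> [|t IH]; first by move=> k; rewrite G0 ffunE.
exact: (round_below_fixpoint f_mono (Gstep t) fixH IH).
Qed.

Lemma execution_eventually_constant : exists T, forall t, T <= t -> G t = G T.
Proof.
have [T const] := @nondecreasing_bounded_eventually_constant
  (fun t => height (G t)) (n * m)
  (fun s t st => height_leL (execution_nondecreasing st)) (fun t => height_le _).
exists T => t Tt; symmetry.
exact: leL_height_eq (execution_nondecreasing Tt) (esym (const t Tt)).
Qed.

End Execution.

Theorem theorem3 (m n : nat) (f : 'I_n -> L m n -> L m n)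
  (f_mono : forall i, monotone (f i))
  (f_infl : forall i, inflationary (f i))
  (S : nat -> {set 'I_n}) (G : nat -> L m n)
  (G0 : G 0 = botL m n)
  (Gstep : forall t, round f (S t) (G t) (G t.+1))
  (fair : forall (i : 'I_n) (t : nat), exists2 t', t <= t' & i \in S t') :
  exists T : nat, exists Gs : L m n,
    (forall t, T <= t -> G t = Gs) /\ least_common_fixed_point f Gs.
Proof.
have [T const] := execution_eventually_constant f_infl Gstep.
exists T, (G T); split=> //; split.
- move=> i; have [t Tt iSt] := fair i T.
  have := Gstep t; rewrite (const t Tt) (const t.+1 (leqW Tt)).
  by move/(round_stationary f_infl); apply.
- by move=> H fixH; apply: execution_below_fixpoint.
Qed.
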